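(* Let $\mathsf G=(\mathsf V,\mathsf E)$ be a finite connected graph without loops or multiple edges, with discrete Laplacian $\mathcal L=\mathcal I\mathcal I^T$. Then the semigroup $(e^{-t\mathcal L^2})_{t\ge0}$ is eventually $\ell^\infty$-contractive, hence eventually sub-Markovian: there exists $t_0>0$ such that for all $t\ge t_0$ the matrix $e^{-t\mathcal L^2}$ is positive (maps vectors with nonnegative entries to vectors with nonnegative entries) and satisfies $\|e^{-t\mathcal L^2}f\|_\infty\le\|f\|_\infty$ for all $f$.
   Context: $V=|\mathsf V|$ and functions on vertices are vectors in $\mathbb C^V$. After fixing an arbitrary orientation of the edges, the incidence matrix $\mathcal I\in\mathbb R^{V\times E}$ has entries $\iota_{\mathsf v\mathsf e}=-1$ if $\mathsf v$ is the initial endpoint of $\mathsf e$, $+1$ if $\mathsf v$ is the terminal endpoint of $\mathsf e$, and $0$ otherwise; $\mathcal L=\mathcal I\mathcal I^T$. *)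

From HB Require Import structures.
From mathcomp Require Import all_boot all_order all_algebra.
From mathcomp Require Import all_classical all_reals all_analysis.
From mathcomp Require Import complex.
Set Implicit Arguments. Unset Strict Implicit. Unset Printing Implicit Defensive.
Import Order.TTheory GRing.Theory Num.Theory.
Local Open Scope ring_scope.

(* A finite graph on vertex set 'I_n with edge set 'I_m; each edge e carries a
   fixed (arbitrary) orientation: initial endpoint src e, terminal endpoint tgt e. *)

Definition no_loops n m (src tgt : 'I_m -> 'I_n) : Prop :=
  forall e, src e != tgt e.

Definition no_multi_edges n m (src tgt : 'I_m -> 'I_n) : Prop :=
  forall e e', e != e' -> [set src e; tgt e] != [set src e'; tgt e'].

Definition adj n m (src tgt : 'I_m -> 'I_n) : rel 'I_n :=
  fun u v => [exists e, ((src e == u) && (tgt e == v)) || ((src e == v) && (tgt e == u))].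

Definition connected_graph n m (src tgt : 'I_m -> 'I_n) : Prop :=
  forall u v, connect (adj src tgt) u v.

Definition incidence (R : pzRingType) n m (src tgt : 'I_m -> 'I_n) : 'M[R]_(n, m) :=
  \matrix_(v, e) (if v == src e then -1 else if v == tgt e then 1 else 0).

Definition laplacian (R : pzRingType) n m (src tgt : 'I_m -> 'I_n) : 'M[R]_n :=
  incidence R src tgt *m (incidence R src tgt)^T.

Definition expmx (R : realType) n (A : 'M[R]_n) : 'M[R]_n :=
  \matrix_(i, j) limn (fun N : nat => \sum_(0 <= k < N) ((A ^+ k) i j / (k`!)%:R)).

Definition norm_inf (R : rcfType) n (f : 'cV[R[i]]_n) : R[i] :=
  \big[Num.max/0]_(i < n) `|f i 0|.

Definition cplx_mx (R : rcfType) n m (A : 'M[R]_(n, m)) : 'M[R[i]]_(n, m) :=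
  map_mx (fun x => (x%:C)%C) A.

From HB Require Import structures.
From mathcomp Require Import all_boot all_order all_algebra.
From mathcomp Require Import all_classical all_reals all_analysis.
From mathcomp Require Import complex.
Import Order.TTheory GRing.Theory Num.Theory.
Set Implicit Arguments. Unset Strict Implicit. Unset Printing Implicit Defensive.
Local Open Scope ring_scope.
Local Open Scope sesquilinear_scope.

(* The Laplacian L is real symmetric, so L = sum_l mu_l u_l^* u_l for an orthonormal
   basis of eigenvectors u_l, and exp(-t L^2) = sum_l exp(-t mu_l^2) u_l^* u_l.
   By connectivity, ker L consists of the constant vectors, so the terms with
   mu_l = 0 add up to the projection onto the constants, whose entries all equal
   1/n > 0; every other term decays exponentially in t.  Hence for large t all
   entries of exp(-t L^2) are nonnegative, and its row sums are 1 for every t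
   because L 1 = 0.  A matrix with nonnegative entries and unit row sums is
   positive and contractive for the sup norm. *)

Section Complexification.
Variable R : rcfType.

Lemma cplx_mxM n p q (A : 'M[R]_(n, p)) (B : 'M[R]_(p, q)) :
  cplx_mx (A *m B) = cplx_mx A *m cplx_mx B.
Proof. exact: map_mxM. Qed.

Lemma cplx_mxX n (A : 'M[R]_n) k : cplx_mx (A ^+ k) = cplx_mx A ^+ k.
Proof.
elim: k => [|k IHk]; last by rewrite !exprS -!mulmxE cplx_mxM IHk.
by rewrite !expr0 /cplx_mx map_mx1.
Qed.

Lemma cplx_mxZ n p c (A : 'M[R]_(n, p)) : cplx_mx (c *: A) = c%:C%C *: cplx_mx A.
Proof. by apply/matrixP => i j; rewrite !mxE rmorphM. Qed.

Lemma cplx_mxT n p (A : 'M[R]_(n, p)) : cplx_mx A^T = (cplx_mx A)^T.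
Proof. by apply/matrixP => i j; rewrite !mxE. Qed.

Lemma conjC_cplx (x : R) : (x%:C%C)^* = x%:C%C.
Proof. exact: conjc_real. Qed.

Lemma cplx_mx_real n p (A : 'M[R]_(n, p)) : cplx_mx A \is a realmx.
Proof. by apply/mxOverP => i j; rewrite mxE; apply/complex_realP; exists (A i j). Qed.

Lemma Re_mulr_real (z : R[i]) (x : R) : complex.Re (z * x%:C%C) = complex.Re z * x.
Proof. by case: z => a b /=; rewrite mulr0 subr0. Qed.

End Complexification.

Section SpectralForm.
Variables (R : rcfType) (n : nat) (U : 'M[R[i]]_n).

(* The rows of a unitary [U] are an orthonormal eigenbasis of [spectral_mx U mu],
   with eigenvalues [mu]; [spectral_weight U i j l] is the real part of the (i, j)
   entry of the projection onto the l-th of them. *)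
Definition spectral_mx (mu : 'I_n -> R) : 'M[R[i]]_n :=
  U^t* *m diag_mx (\row_l (mu l)%:C%C) *m U.

Definition spectral_weight (i j l : 'I_n) : R := complex.Re ((U l i)^* * U l j).

Lemma spectral_mxE mu i j : spectral_mx mu i j = \sum_l (U l i)^* * (mu l)%:C%C * U l j.
Proof. by rewrite mxE; apply: eq_bigr => l _; rewrite mul_mx_diag !mxE. Qed.

Lemma Re_spectral_mxE mu i j :
  complex.Re (spectral_mx mu i j) = \sum_l spectral_weight i j l * mu l.
Proof.
rewrite spectral_mxE raddf_sum; apply: eq_bigr => l _.
by rewrite mulrAC; exact: Re_mulr_real.
Qed.

Hypothesis U_unitary : U \is unitarymx.

Lemma spectral_mxM mu nu :
  spectral_mx mu *m spectral_mx nu = spectral_mx (fun l => mu l * nu l).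
Proof.
rewrite /spectral_mx !mulmxA (mulmxtVK _ U_unitary) -(mulmxA _ _ (diag_mx _)) mulmx_diag.
by congr (_ *m diag_mx _ *m _); apply/rowP => l; rewrite !mxE rmorphM.
Qed.

Lemma spectral_mx1 : spectral_mx (fun=> 1) = 1.
Proof.
rewrite /spectral_mx (_ : \row_l _ = const_mx 1); last by apply/rowP => l; rewrite !mxE.
by rewrite diag_const_mx mulmx1 -invmx_unitary // mulVmx // unitarymx_unit.
Qed.

Lemma spectral_mxX mu k : spectral_mx mu ^+ k = spectral_mx (fun l => mu l ^+ k).
Proof.
elim: k => [|k IHk]; first by rewrite expr0 -spectral_mx1.
by rewrite exprS -mulmxE IHk spectral_mxM; under [in RHS]eq_fun do rewrite exprS.
Qed.

Lemma spectral_mxZ c mu : c%:C%C *: spectral_mx mu = spectral_mx (fun l => c * mu l).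
Proof.
apply/matrixP => i j; rewrite mxE !spectral_mxE mulr_sumr; apply: eq_bigr => l _.
by rewrite rmorphM !mulrA (mulrC c%:C%C).
Qed.

End SpectralForm.

Lemma realsym_spectral (R : rcfType) n (A : 'M[R]_n) : A^T = A ->
  exists U mu, U \is unitarymx /\ cplx_mx A = spectral_mx U mu.
Proof.
move=> A_sym; set B := cplx_mx A.
have B_herm : B \is hermsymmx.
  apply: realsym_hermsym; last exact: cplx_mx_real.
  apply/is_hermitianmxP; rewrite expr0 scale1r map_mx_id //.
  by rewrite /B -cplx_mxT A_sym.
have /orthomx_spectralP B_spectral := hermitian_normalmx B_herm.
have /mxOverP diag_real := hermitian_spectral_diag_real B_herm.
exists (spectralmx B), (fun l => complex.Re (spectral_diag B 0 l)).
split; first exact: spectral_unitarymx.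
rewrite {1}B_spectral invmx_unitary ?spectral_unitarymx //.
by congr (_ *m diag_mx _ *m _); apply/rowP => l; rewrite mxE RRe_real.
Qed.

Lemma spectral_entry (R : rcfType) n (A : 'M[R]_n) U mu :
  cplx_mx A = spectral_mx U mu -> forall i j, A i j = \sum_l spectral_weight U i j l * mu l.
Proof. by move=> A_spectral i j; rewrite -Re_spectral_mxE -A_spectral mxE. Qed.

Lemma expmx_spectral (R : realType) n (A : 'M[R]_n) U mu :
  U \is unitarymx -> cplx_mx A = spectral_mx U mu ->
  forall i j, expmx A i j = \sum_l spectral_weight U i j l * expR (mu l).
Proof.
move=> U_unitary A_spectral i j; rewrite mxE.
have powE k : (A ^+ k) i j = \sum_l spectral_weight U i j l * mu l ^+ k.
  by apply: spectral_entry; rewrite cplx_mxX A_spectral spectral_mxX.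
have -> : (fun N => \sum_(0 <= k < N) (A ^+ k) i j / k`!%:R) =
    (fun N => \sum_l spectral_weight U i j l * series (exp_coeff (mu l)) N).
  apply: funext => N; under eq_bigr do rewrite powE mulr_suml.
  rewrite exchange_big; apply: eq_bigr => l _; rewrite mulr_sumr.
  by apply: eq_bigr => k _; rewrite mulrA.
have partial_sums_cvg : ((fun N => \sum_l spectral_weight U i j l * series (exp_coeff (mu l)) N)
    @ \oo --> \sum_l spectral_weight U i j l * expR (mu l))%classic.
  apply: cvg_big => // [|l _]; first exact: add_continuous.
  by apply: cvgMl_tmp; exact: is_cvg_series_exp_coeff.
exact: cvg_lim partial_sums_cvg.
Qed.

Section Incidence.
Variables (n m : nat) (src tgt : 'I_m -> 'I_n).
Hypothesis src_tgt : no_loops src tgt.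

Lemma incidence_trE (R : pzRingType) (x : 'cV[R]_n) e :
  ((incidence R src tgt)^T *m x) e 0 = x (tgt e) 0 - x (src e) 0.
Proof.
have tgt_src : tgt e != src e by rewrite eq_sym.
rewrite mxE (bigD1 (src e)) // (bigD1 (tgt e)) //= big1 => [|v /andP[v_tgt v_src]].
  by rewrite !mxE eqxx (negbTE tgt_src) eqxx addr0 mulN1r mul1r addrC.
by rewrite !mxE (negbTE v_src) (negbTE v_tgt) mul0r.
Qed.

Lemma laplacian_const (R : pzRingType) : laplacian R src tgt *m (const_mx 1 : 'cV_n) = 0.
Proof.
apply/matrixP => v k; rewrite /laplacian -mulmxA mxE big1 ?mxE // => e _.
by rewrite ord1 incidence_trE !mxE subrr mulr0.
Qed.

Lemma laplacian_sym (R : comPzRingType) : (laplacian R src tgt)^T = laplacian R src tgt.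
Proof. by rewrite /laplacian trmx_mul trmxK. Qed.

Lemma laplacian_ker_const (C : numClosedFieldType) (x : 'cV[C]_n) :
  connected_graph src tgt -> laplacian C src tgt *m x = 0 -> forall u v, x u 0 = x v 0.
Proof.
move=> connected Lx0; set y := (incidence C src tgt)^T *m x.
have incidence_conj : incidence C src tgt ^ Num.conj = incidence C src tgt.
  by apply/matrixP => v e; rewrite !mxE !(fun_if Num.conj) rmorphN1 rmorph1 rmorph0.
have norm_y : \sum_e y e 0 * (y e 0)^* = 0.
  transitivity ((y^t* *m y) 0 0).
    by rewrite mxE; apply: eq_bigr => e _; rewrite !mxE mulrC.
  rewrite trmx_mul map_mxM trmxK incidence_conj /y -mulmxA (mulmxA (incidence C src tgt)).
  by rewrite -/(laplacian C src tgt) Lx0 mulmx0 mxE.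
have y0 e : y e 0 = 0.
  have /eqP := psumr_eq0P (fun e _ => mul_conjC_ge0 (y e 0)) norm_y (i := e) isT.
  by rewrite mul_conjC_eq0 => /eqP.
have adj_eq a b : adj src tgt a b -> x a 0 = x b 0.
  have edge_eq e : x (src e) 0 = x (tgt e) 0.
    by apply/esym/eqP; rewrite -subr_eq0 -incidence_trE -/y y0.
  by case/existsP=> e /orP[] /andP[/eqP<- /eqP<-].
move=> u v; have /connectP[p walk ->] := connected u v.
by elim: p u walk => //= a p IHp u /andP[/adj_eq-> /IHp].
Qed.

End Incidence.

Lemma cplx_laplacian (R : rcfType) n m (src tgt : 'I_m -> 'I_n) :
  cplx_mx (laplacian R src tgt) = laplacian R[i] src tgt.
Proof.
have cplx_incidence : cplx_mx (incidence R src tgt) = incidence R[i] src tgt.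
  by apply/matrixP => v e; rewrite !mxE !(fun_if (real_complex R)) rmorphN1 rmorph1 rmorph0.
by rewrite /laplacian cplx_mxM cplx_mxT cplx_incidence.
Qed.

Section NullSpace.
Variables (R : rcfType) (n : nat) (L : 'M[R]_n) (U : 'M[R[i]]_n) (mu : 'I_n -> R).
Hypotheses (U_unitary : U \is unitarymx) (L_spectral : cplx_mx L = spectral_mx U mu).
Hypothesis L_const : L *m (const_mx 1 : 'cV_n) = 0.
Hypothesis L_ker : forall x : 'cV[R[i]]_n, cplx_mx L *m x = 0 -> forall u v, x u 0 = x v 0.

Let one : 'cV[R[i]]_n := const_mx 1.
Let Q := spectral_mx U (fun l => (mu l == 0)%:R).

Lemma unitary_spectral_mx nu : U *m spectral_mx U nu = diag_mx (\row_l (nu l)%:C%C) *m U.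
Proof. by rewrite /spectral_mx !mulmxA (unitarymxP U_unitary) mul1mx. Qed.

Lemma spectral_row_sum_eq0 l : mu l != 0 -> \sum_j U l j = 0.
Proof.
move=> mu_l; have L_one : cplx_mx L *m one = 0.
  have -> : one = cplx_mx (const_mx 1) by apply/matrixP => ? ?; rewrite !mxE.
  by rewrite -cplx_mxM L_const; apply/matrixP => ? ?; rewrite !mxE.
have : (U *m (cplx_mx L *m one)) l 0 = 0 by rewrite L_one mulmx0 mxE.
rewrite mulmxA L_spectral unitary_spectral_mx -mulmxA mul_diag_mx !mxE.
move/eqP; rewrite mulf_eq0 => /orP[/eqP[mu_l0]|/eqP sum0].
  by rewrite mu_l0 eqxx in mu_l.
by rewrite -[RHS]sum0; apply: eq_bigr => j _; rewrite !mxE mulr1.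
Qed.

Lemma spectral_weight_row_sum_eq0 i l : mu l != 0 -> \sum_j spectral_weight U i j l = 0.
Proof.
move=> mu_l; rewrite /spectral_weight -raddf_sum -mulr_sumr spectral_row_sum_eq0 //.
by rewrite mulr0.
Qed.

Lemma null_projector_one : Q *m one = one.
Proof.
have null_rows : diag_mx (\row_l ((mu l == 0)%:R : R)%:C%C) *m (U *m one) = U *m one.
  apply/matrixP => l k; rewrite mul_diag_mx !mxE; case: eqVneq => [_|mu_l].
    by rewrite mul1r.
  rewrite mul0r -[LHS](spectral_row_sum_eq0 mu_l) (ord1 k).
  by apply: eq_bigr => j _; rewrite !mxE mulr1.
rewrite /Q /spectral_mx -!mulmxA null_rows mulmxA -invmx_unitary //.
by rewrite mulVmx ?mul1mx // unitarymx_unit.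
Qed.

Lemma L_null_projector : cplx_mx L *m Q = 0.
Proof.
rewrite L_spectral (spectral_mxM U_unitary) /spectral_mx.
rewrite (_ : \row_l _ = 0) ?linear0 ?mulmx0 ?mul0mx //.
by apply/rowP => l; rewrite !mxE; case: eqP => [->|]; rewrite ?mul0r ?mulr0 rmorph0.
Qed.

Lemma null_projectorE i j : Q i j = n%:R^-1.
Proof.
have col_const k u v : Q u k = Q v k.
  have := L_ker (x := col k Q) _ u v; rewrite !mxE; apply.
  by rewrite colE mulmxA L_null_projector mul0mx.
have Q_herm u v : Q u v = (Q v u)^*.
  rewrite !spectral_mxE rmorph_sum; apply: eq_bigr => l _.
  by rewrite !rmorphM /= conjCK conjC_cplx [RHS]mulrC mulrA mulrAC.
have row_const u v : Q u v = Q u u by rewrite Q_herm (col_const u v u) -Q_herm.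
have : (Q *m one) i 0 = 1 by rewrite null_projector_one mxE.
rewrite mxE (eq_bigr (fun=> Q i i)) => [|k _]; last first.
  by rewrite [one _ _]mxE mulr1 row_const.
have n_neq0 : n%:R != 0 :> R[i] by rewrite pnatr_eq0 -lt0n (leq_ltn_trans (leq0n i)).
rewrite sumr_const card_ord -[Q i i *+ n]mulr_natr row_const => Qn.
by rewrite -[Q i i](mulfK n_neq0) Qn mul1r.
Qed.

Lemma null_weight_sum i j : \sum_l spectral_weight U i j l * (mu l == 0)%:R = n%:R^-1.
Proof.
rewrite -Re_spectral_mxE -/Q null_projectorE.
by rewrite -(rmorph_nat (real_complex R)) -fmorphV.
Qed.

End NullSpace.

Lemma expRN_le_inv (R : realType) (y : R) : 0 < y -> expR (- y) <= y^-1.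
Proof.
move=> y_gt0; rewrite expRN lef_pV2 ?posrE ?expR_gt0 //.
by apply: le_trans (expR_ge1Dx y); rewrite lerDr.
Qed.

Lemma eventually_expR_le (R : realType) (I : finType) (mu : I -> R) (eps : R) : 0 < eps ->
  exists2 t0, 0 < t0 & forall t, t0 <= t -> forall l, mu l != 0 -> expR (- t * mu l ^+ 2) <= eps.
Proof.
move=> eps_gt0; set t0 := 1 + \sum_l (eps * mu l ^+ 2)^-1.
have inv_ge0 l : 0 <= (eps * mu l ^+ 2)^-1 by rewrite invr_ge0 mulr_ge0 ?sqr_ge0 ?ltW.
have t0_gt0 : 0 < t0 by rewrite ltr_pwDl ?sumr_ge0.
exists t0 => // t t0_le l mu_l.
have sqr_gt0 : 0 < mu l ^+ 2 by rewrite exprn_even_gt0.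
have t_ge : (eps * mu l ^+ 2)^-1 <= t.
  apply: le_trans t0_le; rewrite /t0 (bigD1 l) //= addrCA ler_wpDr //.
  by rewrite addr_ge0 ?sumr_ge0.
have tmu_gt0 : 0 < t * mu l ^+ 2 by rewrite mulr_gt0 // (lt_le_trans t0_gt0).
rewrite mulNr; apply: le_trans (expRN_le_inv tmu_gt0) _.
rewrite -[eps]invrK lef_pV2 ?posrE ?invr_gt0 //.
by rewrite -ler_pdivrMr // -invfM.
Qed.

Lemma ge0_add_small_sum (R : realDomainType) (I : finType) (a eps : R) (w x : I -> R) :
  (forall l, `|x l| <= eps) -> (\sum_l `|w l|) * eps <= a -> 0 <= a + \sum_l w l * x l.
Proof.
move=> x_small sum_le; rewrite -subr_ge0 in sum_le; apply: le_trans sum_le _.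
rewrite lerD2l; apply: lerNnormlW; apply: le_trans (ler_norm_sum _ _ _) _.
rewrite mulr_suml; apply: ler_sum => l _.
by rewrite normrM ler_wpM2l.
Qed.

Lemma eventually_stochastic_expR (R : realType) n (w : 'I_n -> 'I_n -> 'I_n -> R)
    (mu : 'I_n -> R) :
  (forall i j, \sum_l w i j l * (mu l == 0)%:R = n%:R^-1) ->
  (forall i l, mu l != 0 -> \sum_j w i j l = 0) ->
  exists2 t0, 0 < t0 & forall t, t0 <= t -> forall i,
    let S j := \sum_l w i j l * expR (- t * mu l ^+ 2) in
    (forall j, 0 <= S j) /\ \sum_j S j = 1.
Proof.
move=> null_sum row_sum0; have [n0|n_gt0] := posnP n.
  by exists 1 => // t _ i; move: (ltn_ord i); rewrite [X in (_ < X)%N]n0.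
set W := 1 + \sum_(p : 'I_n * 'I_n) \sum_l `|w p.1 p.2 l|.
have W_ge i j : \sum_l `|w i j l| <= W.
  rewrite /W (bigD1 (i, j)) //= addrCA ler_wpDr // addr_ge0 // !sumr_ge0 // => *.
  exact: sumr_ge0.
have W_gt0 : 0 < W by rewrite ltr_pwDl // sumr_ge0 // => *; exact: sumr_ge0.
have eps_gt0 : 0 < n%:R^-1 / W by rewrite divr_gt0 // invr_gt0 ltr0n.
have [t0 t0_gt0 expR_small] := eventually_expR_le mu eps_gt0.
exists t0 => // t t0_le i S.
pose x l := (mu l != 0)%:R * expR (- t * mu l ^+ 2).
have S_split j : S j = n%:R^-1 + \sum_l w i j l * x l.
  rewrite /S -(null_sum i j) -big_split; apply: eq_bigr => l _ /=.
  rewrite -mulrDr /x; case: eqVneq => [->|_] /=.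
    by rewrite expr0n mulr0 expR0 mul0r addr0.
  by rewrite mul1r add0r.
split=> [j|].
  rewrite S_split; apply: (ge0_add_small_sum (eps := n%:R^-1 / W)) => [l|].
    rewrite /x; case: eqVneq => [_|mu_l] /=; first by rewrite mul0r normr0; exact: ltW.
    by rewrite mul1r ger0_norm ?expR_ge0 ?expR_small.
  by rewrite mulrCA ger_pMr ?invr_gt0 ?ltr0n // ler_pdivrMr // mul1r W_ge.
under eq_bigr do rewrite S_split.
rewrite big_split /= sumr_const card_ord -[_ *+ n]mulr_natr mulVf ?pnatr_eq0 -?lt0n //.
rewrite exchange_big big1 ?addr0 // => l _; rewrite -mulr_suml /x.
by case: eqVneq => [_|/(row_sum0 i)->]; rewrite ?mul0r ?mulr0.
Qed.

Section SupNorm.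
Variables (R : rcfType) (n : nat).
Implicit Types f : 'cV[R[i]]_n.

Lemma norm_inf_ge0 f : 0 <= norm_inf f.
Proof. by rewrite /norm_inf; elim/big_ind: _ => // x y; rewrite maxEle; case: ifP. Qed.

Lemma norm_inf_le f c : 0 <= c -> (forall i, `|f i 0| <= c) -> norm_inf f <= c.
Proof. by move=> c_ge0 f_le; apply: bigmax_le. Qed.

Lemma ler_norm_inf f i : `|f i 0| <= norm_inf f.
Proof.
rewrite /norm_inf; elim: (index_enum _) (mem_index_enum i) => // j r IHr.
have rest_ge0 : 0 <= \big[Num.max/0]_(k <- r) `|f k 0|.
  by elim/big_ind: _ => // x y; rewrite maxEle; case: ifP.
rewrite inE big_cons maxEle => /predU1P[<-|/IHr f_le]; case: ifPn => //.
move=> /negP.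
have /comparable_leP[] // := real_comparable (normr_real (f j 0)) (ger0_real rest_ge0).
by move=> /ltW rest_le _; apply: le_trans rest_le.
Qed.

Lemma stochastic_mx_norm_inf (P : 'M[R]_n) :
  (forall i j, 0 <= P i j) -> (forall i, \sum_j P i j = 1) ->
  forall f, norm_inf (cplx_mx P *m f) <= norm_inf f.
Proof.
move=> P_ge0 P_sum1 f; apply: norm_inf_le => [|i]; first exact: norm_inf_ge0.
rewrite mxE; apply: le_trans (ler_norm_sum _ _ _) _.
apply: le_trans (_ : \sum_j (P i j)%:C%C * norm_inf f <= _).
  apply: ler_sum => j _; rewrite normrM mxE ger0_norm ?ler0c //.
  by rewrite ler_wpM2l ?ler0c ?ler_norm_inf.
by rewrite -mulr_suml -rmorph_sum P_sum1 rmorph1 mul1r.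
Qed.

End SupNorm.

Theorem proposition6p7 (R : realType) (n m : nat) (src tgt : 'I_m -> 'I_n)
  (Hloop : no_loops src tgt) (Hmulti : no_multi_edges src tgt)
  (Hconn : connected_graph src tgt) :
  exists t0 : R, 0 < t0 /\
    forall t : R, t0 <= t ->
      let L := laplacian R src tgt in
      let P := expmx ((- t) *: (L *m L)) in
      (forall f : 'cV[R]_n, (forall i, 0 <= f i 0) -> forall i, 0 <= (P *m f) i 0) /\
      (forall f : 'cV[R[i]]_n, norm_inf (cplx_mx P *m f) <= norm_inf f).
Proof.
have [U [mu [U_unitary L_spectral]]] := realsym_spectral (laplacian_sym src tgt R).
have L_ker (x : 'cV_n) : cplx_mx (laplacian R src tgt) *m x = 0 -> forall u v, x u 0 = x v 0.
  by rewrite cplx_laplacian; exact: laplacian_ker_const.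
have L_const := laplacian_const Hloop R.
have [t0 t0_gt0 stochastic] := eventually_stochastic_expR
  (null_weight_sum U_unitary L_spectral L_const L_ker)
  (spectral_weight_row_sum_eq0 U_unitary L_spectral L_const).
exists t0; split => // t /stochastic {}stochastic L P.
have P_spectral i j : P i j = \sum_l spectral_weight U i j l * expR (- t * mu l ^+ 2).
  apply: (expmx_spectral U_unitary).
  rewrite cplx_mxZ cplx_mxM L_spectral spectral_mxM //.
  exact: (spectral_mxZ U (- t) (fun l => mu l * mu l)).
have P_ge0 i j : 0 <= P i j by rewrite P_spectral; exact: (stochastic i).1.
have P_sum1 i : \sum_j P i j = 1.
  by under eq_bigr do rewrite P_spectral; exact: (stochastic i).2.
split; last exact: stochastic_mx_norm_inf.
by move=> f f_ge0 i; rewrite mxE sumr_ge0 // => j _; rewrite mulr_ge0.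
Qed.
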